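(* Let $d\ge1$, $k\ge1$, and let $H$ be a balanced hypergraph of discrete $d$-intervals on the ground set $[k]=\{1,\dots,k\}$. Then $H$ contains a matching $M$ with $\sum_{m\in M}|m|\ge \frac{k}{2d}$.
   Context: A discrete $d$-interval on $[k]$ (with its natural linear order) is a union of at most $d$ pairwise disjoint nonempty sets of consecutive integers in $[k]$. A hypergraph of discrete $d$-intervals on $[k]$ is a finite family of such sets, regarded as a hypergraph on vertex set $[k]$. $H$ is balanced if there is $f:H\to\mathbb{R}_{\ge0}$ with $\sum_{h\ni v}f(h)=1$ for every $v\in[k]$. A matching is a set of pairwise disjoint edges. *)

(* Ground set [k] is modelled by 'I_k = {0,...,k-1} with the
   natural order inherited from nat. *)
From HB Require Import structures.
From mathcomp Require Import all_boot all_order all_algebra.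
Set Implicit Arguments. Unset Strict Implicit. Unset Printing Implicit Defensive.
Import Order.TTheory GRing.Theory Num.Theory.

Definition is_interval (k : nat) (I : {set 'I_k}) : Prop :=
  I != set0 /\
  forall x y z : 'I_k, x \in I -> z \in I -> (x <= y <= z)%N -> y \in I.

Definition d_interval (k d : nat) (h : {set 'I_k}) : Prop :=
  exists s : seq {set 'I_k},
    (size s <= d)%N /\
    (forall I, I \in s -> is_interval I) /\
    (forall i j, (i < size s)%N -> (j < size s)%N -> i <> j ->
       [disjoint nth set0 s i & nth set0 s j]) /\
    h = \bigcup_(I <- s) I.

Definition balanced (R : realFieldType) (k : nat) (H : {set {set 'I_k}}) : Prop :=
  exists f : {set 'I_k} -> R,
    (forall h, h \in H -> 0 <= f h)%R /\
    (forall v : 'I_k, (\sum_(h in H | v \in h) f h)%R = 1%R).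

Definition is_matching (k : nat) (M : {set {set 'I_k}}) : Prop :=
  forall m1 m2, m1 \in M -> m2 \in M -> m1 != m2 -> [disjoint m1 & m2].

(* The proof is a local-ratio argument driven by right endpoints.
   - Every discrete d-interval h has at most d right endpoints (points of h
     whose successor is not in h), and two intersecting sets g, h always
     share a point that is a right endpoint of one of them.
   - Consequently, for any fractional packing x (x >= 0, every point covered
     with weight <= 1) of such sets, the x-average over E of the weight of
     the sets meeting h is at most 2d, so some h with x h > 0 has
     neighbourhood weight at most 2d ("light" edge).
   - Local ratio: for any nonnegative weights w on E there is a matching M in
     E with  sum_E x w <= 2d * w(M).  Subtract w h from the weights of the
     neighbours of a light h, recurse on the sets of positive residual
     weight, and add h to the matching obtained if no member meets it.
   - For a balanced H, taking w g = |g| gives sum_H x w = k by double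
     counting, which yields the corollary. *)
From HB Require Import structures.
From mathcomp Require Import all_boot all_order all_algebra.
From mathcomp Require Import ring lra.
Set Implicit Arguments. Unset Strict Implicit. Unset Printing Implicit Defensive.
Import Order.TTheory GRing.Theory Num.Theory.

Lemma card_bigcup_seq_le (T : finType) (I : eqType) (s : seq I) (A : I -> {set T}) :
  (#|\bigcup_(i <- s) A i| <= \sum_(i <- s) #|A i|)%N.
Proof.
elim: s => [|i s IH]; first by rewrite !big_nil cards0.
by rewrite !big_cons (leq_trans (leq_card_setU _ _)) // leq_add2l.
Qed.

Section RightEnds.
Variable k : nat.
Implicit Types (g h I : {set 'I_k}) (v : 'I_k).

Definition right_ends h : {set 'I_k} :=
  [set v in h | [forall u : 'I_k, (val u == (val v).+1) ==> (u \notin h)]].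

Lemma right_endsP h v :
  reflect (v \in h /\ forall u : 'I_k, val u = (val v).+1 -> u \notin h)
          (v \in right_ends h).
Proof.
rewrite inE; apply: (iffP andP) => -[vh end_v]; split => //.
  by move=> u /eqP uv; exact: implyP (forallP end_v u) uv.
by apply/forallP => u; apply/implyP => /eqP; apply: end_v.
Qed.

(* If g and h meet, the largest common point is a right endpoint of g or of h. *)
Lemma meet_right_ends g h :
  ~~ [disjoint g & h] -> ~~ [disjoint g & right_ends h] || ~~ [disjoint h & right_ends g].
Proof.
case/pred0Pn => v0 v0gh.
have [v /andP[vg vh] vmax] := arg_maxnP (fun v => val v) v0gh.
have succ_out u : val u = (val v).+1 -> (u \notin g) || (u \notin h).
  by move=> uv; rewrite -negb_and; apply/negP => /vmax /=; rewrite uv ltnn.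
have [/existsP[u /andP[/eqP uv ug]] | no_succ] :=
  boolP [exists u : 'I_k, (val u == (val v).+1) && (u \in g)].
  apply/orP; left; apply/pred0Pn; exists v; apply/andP; split => //.
  apply/right_endsP; split => // u' u'v; have -> : u' = u by apply: val_inj; rewrite u'v uv.
  by have := succ_out u uv; rewrite ug.
apply/orP; right; apply/pred0Pn; exists v; apply/andP; split => //.
apply/right_endsP; split => // u uv; apply/negP => ug.
by move/existsP: no_succ; apply; exists u; rewrite uv eqxx ug.
Qed.

Lemma card_right_ends_interval I : is_interval I -> (#|right_ends I| <= 1)%N.
Proof.
case=> _ conv; apply/card_le1_eqP.
suff ends_le a b : a \in right_ends I -> b \in right_ends I -> (val a <= val b)%N -> a = b.
  by move=> a b aR bR; case: (leqP a b) => [ab | /ltnW ba]; [apply/esym/ends_le | apply: ends_le].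
move=> /right_endsP[aI a_end] /right_endsP[bI _] ab.
case: (ltnP a b) => [lt|ge]; last by apply: val_inj; apply/eqP; rewrite eqn_leq ab ge.
have succ_a : ((val a).+1 < k)%N by apply: leq_ltn_trans (ltn_ord b).
have /negP[] := a_end (Ordinal succ_a) erefl.
by apply: (conv a _ b) => //; rewrite /= leqnSn lt.
Qed.

Lemma right_endsS I h v : I \subset h -> v \in I -> v \in right_ends h -> v \in right_ends I.
Proof.
move=> /subsetP Ih vI /right_endsP[_ v_end]; apply/right_endsP; split => // u /v_end.
by apply: contra; apply: Ih.
Qed.

(* A discrete d-interval has at most d right endpoints, one per component. *)
Lemma card_right_ends d h : d_interval d h -> (#|right_ends h| <= d)%N.
Proof.
case=> s [sd [sI [_ hE]]].
have ends_sub : right_ends h \subset \bigcup_(I <- s) right_ends I.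
  apply/subsetP => v vR; have /right_endsP[+ _] := vR.
  rewrite hE bigcup_seq => /bigcupP[I Is vI]; rewrite bigcup_seq; apply/bigcupP.
  by exists I => //; apply: right_endsS vI vR; rewrite hE bigcup_seq (bigcup_sup _ Is).
apply: leq_trans (subset_leq_card ends_sub) _; apply: leq_trans (card_bigcup_seq_le _ _) _.
apply: leq_trans sd; rewrite -sum1_size big_seq [X in (_ <= X)%N]big_seq.
by apply: leq_sum => I /sI; apply: card_right_ends_interval.
Qed.
End RightEnds.

Local Open Scope ring_scope.

Lemma sum_subset_le (R : numDomainType) (I : finType) (A B : {set I}) (P : pred I) (F : I -> R) :
  A \subset B -> (forall i, i \in B -> 0 <= F i) ->
  \sum_(i in A | P i) F i <= \sum_(i in B | P i) F i.
Proof.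
move=> /subsetP AB F_ge0; rewrite [X in X <= _]big_mkcond [X in _ <= X]big_mkcond /=.
apply: ler_sum => i _; case iA: (i \in A); first by rewrite (AB i iA).
by case: ifP => // /andP[/F_ge0].
Qed.

Lemma sum_drop_nonpos (R : realDomainType) (I : finType) (A : {set I}) (a b : I -> R) :
  (forall i, i \in A -> 0 <= a i) ->
  \sum_(i in A) a i * b i <= \sum_(i in A | 0 < b i) a i * b i.
Proof.
move=> a_ge0; rewrite [X in _ <= X]big_mkcondr; apply: ler_sum => i iA /=.
by case: ifP => // /negbT; rewrite -leNgt => bi_le0; rewrite mulr_ge0_le0 ?a_ge0.
Qed.

Lemma matching_setU1 k (M : {set {set 'I_k}}) (h : {set 'I_k}) :
  is_matching M -> (forall m, m \in M -> [disjoint m & h]) -> is_matching (h |: M).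
Proof.
move=> mM dj m1 m2; rewrite !in_setU1 => /orP[/eqP-> | m1M] /orP[/eqP-> | m2M].
- by rewrite eqxx.
- by move=> _; rewrite disjoint_sym dj.
- by move=> _; rewrite dj.
- exact: mM.
Qed.

(* Local-ratio extension step: from a matching M avoiding h, whose weight is
   measured after subtracting w h from every set meeting h, build a matching
   M' of the same family recovering the subtracted weight plus w h: keep M if
   some member meets h, otherwise add h. *)
Lemma extend_matching (R : realFieldType) k (E M : {set {set 'I_k}}) h
    (w : {set 'I_k} -> R) :
  h \in E -> h \notin M -> M \subset E -> is_matching M -> 0 <= w h ->
  exists M' : {set {set 'I_k}}, [/\ M' \subset E, is_matching M' &
    w h + \sum_(g in M) (w g - w h * (~~ [disjoint g & h])%:R) <= \sum_(g in M') w g].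
Proof.
move=> hE hM ME mM wh_ge0; rewrite sumrB -mulr_sumr.
have [/exists_inP[g gM gh] | /exists_inP no_meet] :=
  boolP [exists g in M, ~~ [disjoint g & h]].
  exists M; split => //.
  have one_le : 1 <= \sum_(g in M) (~~ [disjoint g & h])%:R :> R.
    by rewrite (bigD1 g) //= gh lerDl sumr_ge0.
  have := ler_peMr wh_ge0 one_le; lra.
have dj m : m \in M -> [disjoint m & h].
  by move=> mM'; apply/negPn/negP => mh; apply: no_meet; exists m.
have no_meet_sum : \sum_(g in M) (~~ [disjoint g & h])%:R = 0 :> R.
  by rewrite big1 // => g /dj ->.
exists (h |: M); split; last by rewrite big_setU1 //= no_meet_sum mulr0 subr0.
- by rewrite subUset sub1set hE ME.
- exact: matching_setU1.
Qed.

(* A fractional packing x of a family G of nonempty sets, each with at most d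
   "right ends" r g, where intersecting sets always meet each other's right
   ends. *)
Section LocalRatio.
Variables (R : realFieldType) (k d : nat) (r : {set 'I_k} -> {set 'I_k}).
Variables (G : {set {set 'I_k}}) (x : {set 'I_k} -> R).
Implicit Types (E : {set {set 'I_k}}) (g h A : {set 'I_k}).
Hypothesis meet_r :
  forall g h, ~~ [disjoint g & h] -> ~~ [disjoint g & r h] || ~~ [disjoint h & r g].
Hypothesis card_r : forall g, g \in G -> (#|r g| <= d)%N.
Hypothesis x_ge0 : forall g, g \in G -> 0 <= x g.
Hypothesis x_cover : forall v, \sum_(g in G | v \in g) x g <= 1.
Hypothesis G_neq0 : forall g, g \in G -> g != set0.

Lemma x_ge0_sub E : E \subset G -> forall g, g \in E -> 0 <= x g.
Proof. by move=> EG g /(subsetP EG); apply: x_ge0. Qed.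

Definition weight_meeting E A := \sum_(g in E | ~~ [disjoint g & A]) x g.

(* Sets meeting the right ends of h have weight at most d: each contains a
   right end of h, and every point is covered with weight at most 1. *)
Lemma weight_meeting_right_ends E h :
  E \subset G -> h \in G -> weight_meeting E (r h) <= d%:R.
Proof.
move=> EG hG; have x_geE := x_ge0_sub EG.
rewrite /weight_meeting big_mkcondr /=.
apply: (@le_trans _ _ (\sum_(g in E) \sum_(v in r h) x g * (v \in g)%:R)).
  apply: ler_sum => g gE; rewrite -mulr_sumr.
  have ind_ge0 : 0 <= \sum_(v in r h) (v \in g)%:R :> R by rewrite sumr_ge0.
  case: (boolP (~~ [disjoint g & r h])) => [| _].
    rewrite -setI_eq0 => /set0Pn[v /setIP[vg vrh]].
    rewrite -{1}[x g]mulr1 ler_wpM2l ?x_geE // (bigD1 v) //= vg lerDl.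
    by rewrite sumr_ge0.
  by rewrite mulr_ge0 ?x_geE.
rewrite exchange_big /=.
apply: (@le_trans _ _ (\sum_(v in r h) 1)); last first.
  by rewrite sumr_const -[X in _ <= X]mulr1n ler_nat card_r.
apply: ler_sum => v _; apply: le_trans (x_cover v).
rewrite (eq_bigr (fun g => if v \in g then x g else 0)) -?big_mkcondr.
  exact: sum_subset_le.
by move=> g _; case: (v \in g); rewrite ?mulr1 ?mulr0.
Qed.

(* A set meeting h meets the right ends of h, or h meets its right ends. *)
Lemma weight_meeting_le E h : E \subset G ->
  weight_meeting E h <= weight_meeting E (r h) + \sum_(g in E | ~~ [disjoint h & r g]) x g.
Proof.
move=> EG; rewrite /weight_meeting !big_mkcondr -big_split; apply: ler_sum => g gE /=.
have xg := x_ge0 (subsetP EG g gE).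
case: ifP => [/meet_r/orP[] -> | _]; last by rewrite addr_ge0 //; case: ifP.
- by rewrite lerDl; case: ifP.
- by rewrite lerDr; case: ifP.
Qed.

Lemma sum_swap E (P : {set 'I_k} -> {set 'I_k} -> bool) :
  \sum_(h in E) x h * \sum_(g in E | P g h) x g =
  \sum_(g in E) x g * \sum_(h in E | P g h) x h.
Proof.
under eq_bigr do rewrite big_mkcondr mulr_sumr.
rewrite exchange_big /=; apply: eq_bigr => g _.
rewrite big_mkcondr mulr_sumr; apply: eq_bigr => h _.
by case: (P g h); rewrite ?mulr0 // mulrC.
Qed.

Lemma avg_weight_meeting E : E \subset G ->
  \sum_(h in E) x h * weight_meeting E h <= (2 * d)%:R * \sum_(h in E) x h.
Proof.
move=> EG; have x_geE := x_ge0_sub EG.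
have split_bound : \sum_(h in E) x h * weight_meeting E h <=
    \sum_(h in E) x h * weight_meeting E (r h) +
    \sum_(h in E) x h * \sum_(g in E | ~~ [disjoint h & r g]) x g.
  rewrite -big_split /=; apply: ler_sum => h hE.
  by rewrite -mulrDr ler_wpM2l ?x_geE ?weight_meeting_le.
rewrite (sum_swap _ (fun g h => ~~ [disjoint h & r g])) in split_bound.
have right_bound : \sum_(h in E) x h * weight_meeting E (r h) <= d%:R * \sum_(h in E) x h.
  rewrite mulr_sumr; apply: ler_sum => h hE; rewrite [_%:R * _]mulrC ler_wpM2l ?x_geE //.
  exact: weight_meeting_right_ends (subsetP EG h hE).
apply: le_trans split_bound _; rewrite natrM; lra.
Qed.

Lemma exists_light_edge E h0 : E \subset G -> h0 \in E -> 0 < x h0 ->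
  exists2 h, h \in E & (0 < x h) && (weight_meeting E h <= (2 * d)%:R).
Proof.
move=> EG h0E xh0; have x_geE := x_ge0_sub EG.
apply/exists_inP; apply: contraTT (avg_weight_meeting EG).
rewrite negb_exists_in => /forall_inP heavy; rewrite -ltNge mulr_sumr.
have heavy_lt h : h \in E -> 0 < x h -> (2 * d)%:R < weight_meeting E h.
  by move=> hE xh; have := heavy h hE; rewrite xh /= -ltNge.
rewrite (bigD1 h0) //= [X in _ < X](bigD1 h0) //=.
apply: ltr_leD; first by rewrite mulrC ltr_pM2l ?heavy_lt.
apply: ler_sum => h /andP[hE _]; have [xh0'|xh] := eqVneq (x h) 0.
  by rewrite xh0' !mul0r mulr0.
have xh_pos : 0 < x h by rewrite lt_def xh x_geE.
by rewrite mulrC ler_pM2l // ltW ?heavy_lt.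
Qed.

Lemma local_ratio E (w : {set 'I_k} -> R) :
  E \subset G -> (forall g, g \in E -> 0 <= w g) ->
  exists M : {set {set 'I_k}}, [/\ M \subset E, is_matching M &
    \sum_(g in E) x g * w g <= (2 * d)%:R * \sum_(g in M) w g].
Proof.
have [n] := ubnP #|E|; elim: n E w => // n IH E w /ltnSE cardE EG w_ge0.
have x_geE := x_ge0_sub EG.
have [/exists_inP[h0 h0E xh0] | /exists_inP no_pos] :=
  boolP [exists h0 in E, 0 < x h0]; last first.
  exists set0; split; rewrite ?sub0set ?big_set0 ?mulr0 //; first by move=> m1; rewrite inE.
  rewrite big1 // => g gE; have [xg0 | xg] := eqVneq (x g) 0; first by rewrite xg0 mul0r.
  by case: no_pos; exists g; rewrite // lt_def xg x_geE.
have [h hE /andP[xh light]] := exists_light_edge EG h0E xh0.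
pose w' g := w g - w h * (~~ [disjoint g & h])%:R.
pose E' := [set g in E | 0 < w' g].
have hh : ~~ [disjoint h & h] by rewrite -setI_eq0 setIid G_neq0 // (subsetP EG).
have E'E : E' \subset E by apply/subsetP => g; rewrite inE => /andP[].
have hE' : h \notin E' by rewrite inE /w' hh mulr1 subrr ltxx andbF.
have cardE' : (#|E'| < n)%N.
  by apply: leq_trans (proper_card _) cardE; apply/properP; split => //; exists h.
have w'_ge0 g : g \in E' -> 0 <= w' g by rewrite inE => /andP[_ /ltW].
have [M' [M'E' mM' boundM']] := IH E' w' cardE' (subset_trans E'E EG) w'_ge0.
have [M [ME mM boundM]] := extend_matching hE (contra (subsetP M'E' h) hE')
  (subset_trans M'E' E'E) mM' (w_ge0 h hE).
exists M; split => //.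
have split_w : \sum_(g in E) x g * w g =
    \sum_(g in E) x g * w' g + w h * weight_meeting E h.
  rewrite /weight_meeting big_mkcondr mulr_sumr -big_split; apply: eq_bigr => g _ /=.
  by rewrite /w'; case: ifP => _; rewrite /= ?mulr1 ?mulr0; ring.
have drop_w' : \sum_(g in E) x g * w' g <= \sum_(g in E') x g * w' g.
  apply: le_trans (sum_drop_nonpos _ x_geE) _.
  by under [X in _ <= X]eq_bigl do rewrite inE.
have light_w : w h * weight_meeting E h <= w h * (2 * d)%:R by rewrite ler_wpM2l ?w_ge0.
have grow : (2 * d)%:R * (w h + \sum_(g in M') w' g) <= (2 * d)%:R * \sum_(g in M) w g.
  by rewrite ler_wpM2l.
lra.
Qed.

End LocalRatio.

Lemma sum_weight_card (R : pzSemiRingType) (T : finType) (E : {set {set T}}) (x : {set T} -> R) :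
  (forall v, \sum_(g in E | v \in g) x g = 1) ->
  \sum_(g in E) x g * #|g|%:R = #|T|%:R.
Proof.
move=> x_cover; transitivity (\sum_(g in E) \sum_(v : T) x g * (v \in g)%:R).
  apply: eq_bigr => g _; rewrite -mulr_sumr -sum1_card natr_sum big_mkcond /=.
  by congr (_ * _); apply: eq_bigr => v _; case: (v \in g).
rewrite exchange_big /=; transitivity (\sum_(v : T) (1 : R)); last by rewrite sumr_const.
apply: eq_bigr => v _.
rewrite -[RHS](x_cover v) big_mkcondr; apply: eq_bigr => g _.
by case: (v \in g); rewrite ?mulr1 ?mulr0.
Qed.

Theorem corollary5p2 (R : realFieldType) (d k : nat) (H : {set {set 'I_k}}) :
  (1 <= d)%N -> (1 <= k)%N ->
  (forall h, h \in H -> d_interval d h) ->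
  balanced R H ->
  exists M : {set {set 'I_k}},
    M \subset H /\ is_matching M /\ (k <= 2 * d * \sum_(m in M) #|m|)%N.
Proof.
move=> _ _ H_dint [f [f_ge0 f_cover]].
(* Empty edges cover no point: dropping them preserves the balancing. *)
pose G := [set g in H | g != set0].
have GH : G \subset H by apply/subsetP => g; rewrite inE => /andP[].
have G_cover v : \sum_(g in G | v \in g) f g = 1.
  rewrite -(f_cover v); apply: eq_bigl => g; rewrite inE.
  case vg: (v \in g); rewrite ?andbF ?andbT //.
  by case: (g \in H) => //=; apply/set0Pn; exists v.
have G_ge0 g : g \in G -> 0 <= f g by move/(subsetP GH); apply: f_ge0.
have G_ends g : g \in G -> (#|right_ends g| <= d)%N.
  by move/(subsetP GH)/H_dint; apply: card_right_ends.
have G_le1 v : \sum_(g in G | v \in g) f g <= 1 by rewrite G_cover.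
have G_neq0 g : g \in G -> g != set0 by rewrite inE => /andP[].
have [M [MG mM bound]] := local_ratio (@meet_right_ends k) G_ends G_ge0
  G_le1 G_neq0 (subxx G) (fun g _ => ler0n R #|g|).
exists M; split; first exact: subset_trans MG GH.
by split => //; rewrite (sum_weight_card G_cover) card_ord -natr_sum -natrM ler_nat in bound.
Qed.
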